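(* Let $k\ge3$ be odd, let $G=(V,E)$ be a $k$-uniform power hypergraph, and let $\mathbf x\in\mathbb R^n$ be an H-eigenvector of its Laplacian tensor $\mathcal L$ corresponding to an H-eigenvalue $\lambda\neq1$. Let $e\in E$. (i) If $e$ has exactly one intersectional vertex $i$ and $x_s\neq0$ for some cored vertex $s\in e$, then $(1-\lambda)x_s=x_i$. (ii) If $e$ has exactly two intersectional vertices $i$ and $j$ and $x_s\neq0$ for some cored vertex $s\in e$, then $x_ix_j=(1-\lambda)x_s^2$.
   Context: A $k$-uniform power hypergraph is the $k$-th power $H^k$ of a simple graph $H=(V_H,E_H)$: for each edge $e\in E_H$ add $k-2$ new distinct vertices $i_{e,1},\ldots,i_{e,k-2}$ (different for different edges and not in $V_H$), and take as edges the sets $e\cup\{i_{e,1},\ldots,i_{e,k-2}\}$, $e\in E_H$. For a $k$-uniform hypergraph with vertex set $[n]$, $d_i$ is the number of edges containing $i$; a vertex of degree one is a cored vertex and a vertex of degree larger than one is an intersectional vertex. The Laplacian tensor $\mathcal L=\mathcal D-\mathcal A$ ($\mathcal D$ diagonal with entries $d_i$, $\mathcal A$ with entries $\frac1{(k-1)!}$ at index tuples forming an edge and $0$ otherwise) satisfies $(\mathcal L\mathbf x^{k-1})_i=d_ix_i^{k-1}-\sum_{e\ni i}\prod_{s\in e\setminus\{i\}}x_s$. A real $\lambda$ is an H-eigenvalue with H-eigenvector $\mathbf x\neq0$ if $(\mathcal L\mathbf x^{k-1})_i=\lambda x_i^{k-1}$ for all $i$. *)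

From mathcomp Require Import all_boot all_order all_algebra.
Set Implicit Arguments. Unset Strict Implicit. Unset Printing Implicit Defensive.
Import Order.TTheory GRing.Theory Num.Theory.
Local Open Scope ring_scope.

Definition hdeg (n : nat) (E : {set {set 'I_n}}) (i : 'I_n) : nat :=
  #|[set e in E | i \in e]|.

(* E is the k-th power H^k of a simple graph H = (VH, EH) (EH: 2-subsets of VH);
   ext f are the k-2 new vertices added to edge f (distinct for distinct
   edges, outside VH); the vertex set [n] is VH together with all new
   vertices, and the edges are f :|: ext f. *)
Definition is_power_hypergraph (n k : nat) (E : {set {set 'I_n}}) : Prop :=
  exists (VH : {set 'I_n}) (EH : {set {set 'I_n}}) (ext : {set 'I_n} -> {set 'I_n}),
    [/\ (forall f, f \in EH -> f \subset VH /\ #|f| = 2),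
        (forall f, f \in EH -> [disjoint ext f & VH] /\ #|ext f| = (k - 2)%N),
        (forall f g, f \in EH -> g \in EH -> f != g -> [disjoint ext f & ext g]),
        E = [set f :|: ext f | f in EH]
      & VH :|: \bigcup_(f in EH) ext f = setT].

Definition laplacian_apply (R : ringType) (n k : nat) (E : {set {set 'I_n}})
  (x : 'I_n -> R) (i : 'I_n) : R :=
  (hdeg E i)%:R * x i ^+ (k - 1) - \sum_(e in E | i \in e) \prod_(s in e :\ i) x s.

Definition is_H_eigenpair (R : ringType) (n k : nat) (E : {set {set 'I_n}})
  (lam : R) (x : 'I_n -> R) : Prop :=
  (exists i, x i != 0) /\
  (forall i, laplacian_apply k E x i = lam * x i ^+ (k - 1)).

From mathcomp Require Import all_boot all_order all_algebra.
From mathcomp Require Import ring.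
Set Implicit Arguments. Unset Strict Implicit. Unset Printing Implicit Defensive.
Import Order.TTheory GRing.Theory Num.Theory.
Local Open Scope ring_scope.

(* A cored vertex t of an edge e lies in no other edge, so its eigen-equation
   reads d_t x_t^{k-1} - prod_{v in e, v <> t} x_v = lam x_t^{k-1}, i.e.
   (1 - lam) x_t^k = prod_{v in e} x_v.  The right-hand side does not depend
   on t, and x -> x^k is injective for odd k, so all cored vertices of e share
   one value c (when lam <> 1).  Hence for the set A of intersectional vertices
   of e, (1 - lam) c^k = c^(k - |A|) prod_{v in A} x_v, and cancelling
   c^(k - |A|) gives (1 - lam) c^|A| = prod_{v in A} x_v; the cases
   |A| = 1 and |A| = 2 are the two claims. *)

Lemma exprn_odd_inj (R : realDomainType) (k : nat) :
  odd k -> injective (fun a : R => a ^+ k).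
Proof.
move=> k_odd a b /= hab.
have k_gt0 : (0 < k)%N by case: k k_odd {hab}.
have sgn_ab : (0 <= a) = (0 <= b).
  by rewrite -(exprn_odd_ge0 a k_odd) -(exprn_odd_ge0 b k_odd) hab.
have [a_ge0|a_lt0] := boolP (0 <= a).
  by apply: (pexpIrn k_gt0); rewrite ?nnegrE -?sgn_ab.
have Na_ge0 : 0 <= - a by rewrite oppr_ge0 ltW // ltNge.
have Nb_ge0 : 0 <= - b by rewrite oppr_ge0 ltW // ltNge -sgn_ab.
apply: oppr_inj; apply: (pexpIrn k_gt0); rewrite ?nnegrE //.
by rewrite (exprNn a) (exprNn b) hab.
Qed.

Lemma prod_setID_const (R : comPzSemiRingType) (T : finType)
    (A e : {set T}) (F : T -> R) (c : R) :
  A \subset e -> (forall v, v \in e :\: A -> F v = c) ->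
  \prod_(v in e) F v = \prod_(v in A) F v * c ^+ (#|e| - #|A|).
Proof.
move=> sAe Fc; rewrite (big_setID A) (setIidPr sAe) -(cardsDS sAe).
by rewrite (eq_bigr _ Fc) prodr_const.
Qed.

Lemma hdeg_gt0 (n : nat) (E : {set {set 'I_n}}) (e : {set 'I_n}) (v : 'I_n) :
  e \in E -> v \in e -> (0 < hdeg E v)%N.
Proof. by move=> eE ve; rewrite card_gt0; apply/set0Pn; exists e; rewrite inE eE ve. Qed.

Lemma sum_edges_at_hdeg1 (V : nmodType) (n : nat) (E : {set {set 'I_n}})
    (e : {set 'I_n}) (t : 'I_n) (F : {set 'I_n} -> V) :
  e \in E -> t \in e -> hdeg E t = 1%N -> \sum_(f in E | t \in f) F f = F e.
Proof.
move=> eE te /eqP/cards1P[e' edges_t].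
have edge_at_t f : (f \in E) && (t \in f) = (f == e').
  by rewrite -in_set1 -edges_t inE.
have e'_eq : e' = e by apply/esym/eqP; rewrite -edge_at_t eE te.
by rewrite (eq_bigl (pred1 e)) ?big_pred1_eq // => f; rewrite edge_at_t e'_eq.
Qed.

Lemma card_power_edge (n k : nat) (E : {set {set 'I_n}}) (e : {set 'I_n}) :
  (2 <= k)%N -> is_power_hypergraph k E -> e \in E -> #|e| = k.
Proof.
move=> k_ge2 [VH [EH [ext [EH_pairs ext_new _ -> _]]]] /imsetP[f fEH ->].
have [sfVH card_f] := EH_pairs f fEH; have [ext_VH card_ext] := ext_new f fEH.
have /disjoint_setI0 f_ext : [disjoint f & ext f].
  by rewrite disjoint_sym (disjointWr sfVH).
by rewrite cardsU f_ext cards0 subn0 card_f card_ext subnKC.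
Qed.

Section CoredVertices.

Variables (n k : nat) (E : {set {set 'I_n}}) (e : {set 'I_n}).
Hypotheses (k_gt0 : (0 < k)%N) (eE : e \in E).

Lemma hdeg1_eigen_eq (R : comNzRingType) (lam : R) (x : 'I_n -> R) (t : 'I_n) :
  is_H_eigenpair k E lam x -> t \in e -> hdeg E t = 1%N ->
  (1 - lam) * x t ^+ k = \prod_(v in e) x v.
Proof.
move=> [_ eigen] te deg_t; have := eigen t.
rewrite /laplacian_apply deg_t (sum_edges_at_hdeg1 _ eE te deg_t) mul1r.
move/eqP; rewrite subr_eq addrC -subr_eq => /eqP prod_e.
rewrite (big_setD1 _ te) -prod_e.
by rewrite -(prednK k_gt0) exprS subn1 /=; ring.
Qed.

Variables (R : realFieldType) (lam : R) (x : 'I_n -> R).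
Hypotheses (k_odd : odd k) (lam_neq1 : lam != 1) (eigen : is_H_eigenpair k E lam x).

Lemma hdeg1_eigen_same (t s : 'I_n) :
  t \in e -> s \in e -> hdeg E t = 1%N -> hdeg E s = 1%N -> x t = x s.
Proof.
move=> te se deg_t deg_s; apply: (exprn_odd_inj k_odd).
have lam1 : 1 - lam != 0 by rewrite subr_eq0 eq_sym.
by apply: (mulfI lam1); rewrite !hdeg1_eigen_eq.
Qed.

Lemma intersectional_eigen_eq (A : {set 'I_n}) (s : 'I_n) :
  #|e| = k -> A = [set v in e | (1 < hdeg E v)%N] ->
  s \in e -> hdeg E s = 1%N -> x s != 0 ->
  (1 - lam) * x s ^+ #|A| = \prod_(v in A) x v.
Proof.
move=> card_e defA se deg_s xs_neq0.
have sAe : A \subset e by apply/subsetP => v; rewrite defA inE => /andP[].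
have cored_eq v : v \in e :\: A -> x v = x s.
  rewrite defA !inE negb_and => /andP[/orP[/negPf-> // | deg_v] ve].
  apply: hdeg1_eigen_same => //; move: deg_v (hdeg_gt0 eE ve).
  by case: (hdeg E v) => [|[]].
have := hdeg1_eigen_eq eigen se deg_s.
rewrite (prod_setID_const sAe cored_eq) card_e.
have A_le_k : (#|A| <= k)%N by rewrite -card_e subset_leq_card.
rewrite -[in LHS](subnKC A_le_k) exprD mulrA.
by apply: mulIf; rewrite expf_neq0.
Qed.

End CoredVertices.

Theorem lemma4p1 (R : realFieldType) (n k : nat) (E : {set {set 'I_n}})
  (lam : R) (x : 'I_n -> R) :
  (3 <= k)%N -> odd k ->
  is_power_hypergraph k E ->
  is_H_eigenpair k E lam x ->
  lam != 1 ->
  forall e, e \in E ->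
    (forall i s : 'I_n,
        [set v in e | (1 < hdeg E v)%N] = [set i] ->
        s \in e -> hdeg E s = 1%N -> x s != 0 ->
        (1 - lam) * x s = x i) /\
    (forall i j s : 'I_n, i != j ->
        [set v in e | (1 < hdeg E v)%N] = [set i; j] ->
        s \in e -> hdeg E s = 1%N -> x s != 0 ->
        x i * x j = (1 - lam) * x s ^+ 2).
Proof.
move=> k_ge3 k_odd power eigen lam_neq1 e eE.
have k_ge2 : (2 <= k)%N by apply: ltnW.
have k_gt0 : (0 < k)%N by apply: ltnW.
have card_e := card_power_edge k_ge2 power eE.
have key := intersectional_eigen_eq k_gt0 eE k_odd lam_neq1 eigen card_e.
split=> [i s /esym defA se deg_s xs_neq0 | i j s ij /esym defA se deg_s xs_neq0].
- by have := key _ _ defA se deg_s xs_neq0; rewrite cards1 big_set1.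
- have := key _ _ defA se deg_s xs_neq0.
  by rewrite cards2 ij big_setU1 ?big_set1 ?inE.
Qed.
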